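(* Let $S$ be a finite set of points in $\mathbb{R}^d$ with Euclidean distance, $f\ge0$ an integer, $0<\theta<\pi/4$, $\mathcal{C}$ a cone collection as in the context, and $\Theta=\Theta(\theta,2f+1)$. Let $F$ be a set of edges of $\Theta$ such that $(S,F)$ has maximum degree at most $f$. Then for every edge $\{p,q\}$ of $K_S\setminus F$, $\delta_{\Theta\setminus F}(p,q)\le t\,|pq|$, where $t=1/(\cos\theta-\sin\theta)$.
   Context: $K_S$ is the complete graph on $S$ with edge weights the Euclidean distances; all graphs have Euclidean edge weights; $\delta_X$ is shortest-path distance in $X$; $X\setminus F$ is $X$ with the edges of $F$ removed. $\mathcal{C}$ is a finite collection of cones with apex at the origin covering $\mathbb{R}^d$, each of angular diameter at most $\theta$, i.e. $\max\{\angle(0x,0y):x,y\in C\setminus\{0\}\}\le\theta$. For each $C\in\mathcal{C}$ fix a ray $\ell_C$ from the origin contained in $C$. For $p\in S$: $C+p=\{x+p:x\in C\}$, $\ell_C+p$ is the translate of $\ell_C$ emanating from $p$, and $S_{p,C}=(C+p)\cap(S\setminus\{p\})$. The graph $\Theta(\theta,k)$ has vertex set $S$, and for each $p\in S$ and $C\in\mathcal{C}$ it contains an edge from $p$ to each of $\min(k,|S_{p,C}|)$ points of $S_{p,C}$ whose orthogonal projections onto $\ell_C+p$ are closest to $p$ (ties broken arbitrarily). *)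

From HB Require Import structures.
From mathcomp Require Import all_boot all_order all_algebra.
From mathcomp Require Import all_classical all_reals all_analysis.
Set Implicit Arguments. Unset Strict Implicit. Unset Printing Implicit Defensive.
Import Order.TTheory GRing.Theory Num.Theory.
Local Open Scope ring_scope.

Section Geom.
Variables (R : realType) (d : nat).
Notation pt := 'rV[R]_d.

Definition dotp (x y : pt) : R := \sum_(i < d) x ord0 i * y ord0 i.
Definition eucl_norm (x : pt) : R := Num.sqrt (dotp x x).
Definition eucl_dist (x y : pt) : R := eucl_norm (x - y).

Definition angle (x y : pt) : R := acos (dotp x y / (eucl_norm x * eucl_norm y)).

Definition is_cone (C : pred pt) : Prop :=
  forall x (l : R), x \in C -> 0 < l -> l *: x \in C.

(* A finite collection of cones (indexed by a finType I) covering R^d,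
   each of angular diameter at most theta, with a chosen ray ell_C = {l u : l >= 0}
   contained in each cone C. *)
Definition cone_collection (I : finType) (Cn : I -> pred pt) (u : I -> pt)
    (theta : R) : Prop :=
  [/\ forall i, is_cone (Cn i),
      forall x : pt, exists i, x \in Cn i,
      forall i x y, x \in Cn i -> y \in Cn i -> x != 0 -> y != 0 ->
         angle x y <= theta,
      forall i, u i != 0 &
      forall i (l : R), 0 <= l -> l *: u i \in Cn i].

Definition proj_ray (p v x : pt) : pt :=
  p + Num.max 0 (dotp (x - p) v / dotp v v) *: v.

Definition SpC (S : seq pt) (C : pred pt) (p : pt) : seq pt :=
  [seq x <- S | (x != p) && (x - p \in C)].

(* sel is a valid choice of Theta(theta,k) out-neighbours: for each p in S and
   cone i, sel p i consists of min(k, |S_{p,C}|) points of S_{p,C} whose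
   projections onto ell_C + p are closest to p (ties broken arbitrarily). *)
Definition theta_selection (I : finType) (Cn : I -> pred pt) (u : I -> pt)
    (S : seq pt) (k : nat) (sel : pt -> I -> seq pt) : Prop :=
  forall p i, p \in S ->
    [/\ uniq (sel p i),
        {subset sel p i <= SpC S (Cn i) p},
        size (sel p i) = minn k (size (SpC S (Cn i) p)) &
        forall q r, q \in sel p i -> r \in SpC S (Cn i) p -> r \notin sel p i ->
          eucl_dist (proj_ray p (u i) q) p <= eucl_dist (proj_ray p (u i) r) p].

Definition theta_edge (I : finType) (S : seq pt) (sel : pt -> I -> seq pt)
    (p q : pt) : Prop :=
  [/\ p \in S, q \in S & exists i, q \in sel p i \/ p \in sel q i].

(* delta_G(p,q) <= b for the Euclidean-weighted graph G on S with edge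
   relation E: there is a walk p = x_0, ..., x_n = q in G of total
   Euclidean length at most b. *)
Definition graph_dist_le (S : seq pt) (E : pt -> pt -> Prop) (p q : pt) (b : R)
  : Prop :=
  exists (n : nat) (x : nat -> pt),
    [/\ x 0%N = p, x n = q,
        forall j, (j <= n)%N -> x j \in S,
        forall j, (j < n)%N -> E (x j) (x j.+1) &
        \sum_(j < n) eucl_dist (x j) (x j.+1) <= b].

End Geom.

From HB Require Import structures.
From mathcomp Require Import all_boot all_order all_algebra.
From mathcomp Require Import all_classical all_reals all_analysis.
From mathcomp Require Import ring lra zify.
Import Order.TTheory GRing.Theory Num.Theory.
Local Open Scope ring_scope.

(* Induction on |pq|.  If q is not among the 2f+1 selected neighbours of p in
   the cone C containing q, then at least one selected neighbour r is joined
   to neither p nor q by a faulty edge, since each of p and q has at most f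
   faulty edges.  The edge pr survives, and because r lies in the same cone as
   q with a closer projection onto the ray, the elementary estimate
   |pr| + |rq|/(cos θ - sin θ) <= |pq|/(cos θ - sin θ) with |rq| < |pq|
   lets the induction hypothesis route r to q. *)

Section Euclid.
Context {R : realType} {d : nat}.
Notation pt := 'rV[R]_d.
Implicit Types (x y z w : pt).

Lemma dotpC x y : dotp x y = dotp y x.
Proof. by apply: eq_bigr => i _; rewrite mulrC. Qed.

Lemma dotpDl x y z : dotp (x + y) z = dotp x z + dotp y z.
Proof. by rewrite /dotp -big_split; apply: eq_bigr => i _; rewrite !mxE mulrDl. Qed.

Lemma dotpNl x z : dotp (- x) z = - dotp x z.
Proof. by rewrite /dotp -sumrN; apply: eq_bigr => i _; rewrite !mxE mulNr. Qed.

Lemma dotpZl a x z : dotp (a *: x) z = a * dotp x z.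
Proof. by rewrite /dotp mulr_sumr; apply: eq_bigr => i _; rewrite !mxE mulrA. Qed.

Lemma dotpBl x y z : dotp (x - y) z = dotp x z - dotp y z.
Proof. by rewrite dotpDl dotpNl. Qed.

Lemma dotpBr x y z : dotp z (x - y) = dotp z x - dotp z y.
Proof. by rewrite dotpC dotpBl !(dotpC z). Qed.

Lemma dotpZr a x z : dotp z (a *: x) = a * dotp z x.
Proof. by rewrite dotpC dotpZl dotpC. Qed.

Lemma dotp0r x : dotp x 0 = 0.
Proof. by rewrite /dotp big1 // => i _; rewrite mxE mulr0. Qed.

Lemma dotpp_ge0 x : 0 <= dotp x x.
Proof. by apply: sumr_ge0 => i _; rewrite -expr2 sqr_ge0. Qed.

Lemma dotpp_eq0 x : (dotp x x == 0) = (x == 0).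
Proof.
apply/idP/eqP => [|->]; last by rewrite dotp0r.
rewrite psumr_eq0 => [/allP x0|i _]; last by rewrite -expr2 sqr_ge0.
apply/rowP => i; rewrite mxE; apply/eqP.
by rewrite -sqrf_eq0 expr2; apply: x0; apply: mem_index_enum.
Qed.

Lemma dotpp_gt0 {x} : x != 0 -> 0 < dotp x x.
Proof. by rewrite lt_def dotpp_ge0 dotpp_eq0 andbT. Qed.

Lemma eucl_norm_ge0 x : 0 <= eucl_norm x.
Proof. exact: sqrtr_ge0. Qed.

Lemma eucl_norm_gt0 {x} : x != 0 -> 0 < eucl_norm x.
Proof. by move=> x0; rewrite sqrtr_gt0 dotpp_gt0. Qed.

Lemma eucl_norm_sqr x : eucl_norm x ^+ 2 = dotp x x.
Proof. by rewrite sqr_sqrtr // dotpp_ge0. Qed.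

Lemma eucl_normN x : eucl_norm (- x) = eucl_norm x.
Proof. by rewrite /eucl_norm dotpNl dotpC dotpNl opprK. Qed.

Lemma eucl_normZ a x : 0 <= a -> eucl_norm (a *: x) = a * eucl_norm x.
Proof.
move=> a0; rewrite /eucl_norm dotpZl dotpZr mulrA sqrtrM ?mulr_ge0 //.
by rewrite -expr2 sqrtr_sqr ger0_norm.
Qed.

Lemma eucl_distC x y : eucl_dist x y = eucl_dist y x.
Proof. by rewrite /eucl_dist -eucl_normN opprB. Qed.

Lemma cauchy_schwarz_sqr x y : dotp x y ^+ 2 <= dotp x x * dotp y y.
Proof.
have [->|y0] := eqVneq y 0; first by rewrite !dotp0r expr0n /= mulr0.
have yy0 := dotpp_gt0 y0.
pose t := dotp x y / dotp y y.
have ht : t * dotp y y = dotp x y by rewrite mulfVK // gt_eqF.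
have := dotpp_ge0 (x - t *: y).
rewrite !dotpBl !dotpBr !dotpZl !dotpZr (dotpC y x).
nra.
Qed.

Lemma cauchy_schwarz x y : `|dotp x y| <= eucl_norm x * eucl_norm y.
Proof.
rewrite -sqrtr_sqr /eucl_norm -sqrtrM ?dotpp_ge0 //.
by rewrite ler_sqrt ?mulr_ge0 ?dotpp_ge0 // cauchy_schwarz_sqr.
Qed.

Lemma dotp_ge_cos_angle {x y} {th : R} : x != 0 -> y != 0 ->
  0 <= th <= pi -> angle x y <= th ->
  cos th * (eucl_norm x * eucl_norm y) <= dotp x y.
Proof.
move=> x0 y0 /andP[th0 thpi] xyth.
have nxy : 0 < eucl_norm x * eucl_norm y by rewrite mulr_gt0 ?eucl_norm_gt0.
rewrite -ler_pdivlMr //; set z := _ / _.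
have zin : z \in `[-1, 1].
  have := cauchy_schwarz x y; rewrite ler_norml => /andP[h1 h2].
  by rewrite in_itv /= ler_pdivlMr // ler_pdivrMr // mulN1r h1 mul1r h2.
rewrite -(acosK zin) leNgt ltr_cos ?in_itv /= ?th0 ?thpi ?acos_ge0 ?acos_lepi //.
by rewrite -leNgt.
Qed.

Lemma dist_proj_ray p w x :
  eucl_dist (proj_ray p w x) p = Num.max 0 (dotp (x - p) w / dotp w w) * eucl_norm w.
Proof. by rewrite /eucl_dist /proj_ray addrAC subrr add0r eucl_normZ // le_max lexx. Qed.

Lemma dotp_le_of_dist_proj_ray {p w x} y : w != 0 -> 0 < dotp (x - p) w ->
  eucl_dist (proj_ray p w x) p <= eucl_dist (proj_ray p w y) p ->
  dotp (x - p) w <= dotp (y - p) w.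
Proof.
move=> w0 xw0; have ww0 := dotpp_gt0 w0.
rewrite !dist_proj_ray ler_pM2r ?eucl_norm_gt0 // (@max_r _ _ 0); last first.
  by rewrite divr_ge0 // ltW.
by rewrite le_max leNgt divr_gt0 //= ler_pM2r ?invr_gt0.
Qed.

Lemma norm_cos_le_of_dotp {c : R} {x y w} : w != 0 ->
  c * (eucl_norm x * eucl_norm w) <= dotp x w -> dotp x w <= dotp y w ->
  eucl_norm x * c <= eucl_norm y.
Proof.
move=> w0 xw xyw; rewrite -(ler_pM2r (eucl_norm_gt0 w0)).
have := le_trans (ler_norm _) (cauchy_schwarz y w).
nra.
Qed.

(* The identity behind this bound:
   (L - (c - s) m)^2 - (m^2 - 2 c m L + L^2) = 2 s m (L - c m) + m^2 (c^2 + s^2 - 1). *)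
Lemma norm_sub_le_cos_sin {c s : R} {x y} : c ^+ 2 + s ^+ 2 = 1 -> 0 <= s ->
  eucl_norm x * c <= eucl_norm y ->
  c * (eucl_norm x * eucl_norm y) <= dotp x y ->
  eucl_norm (x - y) <= eucl_norm y - (c - s) * eucl_norm x.
Proof.
move=> cs1 s0 xcy xy.
have law_cos : eucl_norm (x - y) ^+ 2
    = eucl_norm x ^+ 2 - 2 * dotp x y + eucl_norm y ^+ 2.
  by rewrite !eucl_norm_sqr dotpBl !dotpBr (dotpC y x); ring.
have := eucl_norm_ge0 x; have := eucl_norm_ge0 (x - y).
move: law_cos xcy xy.
set m := eucl_norm x; set L := eucl_norm y; set r := eucl_norm (x - y).
move=> law_cos xcy xy m0 r0.
have key : 0 <= s * m * (L - m * c) by rewrite !mulr_ge0 ?subr_ge0.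
have rhs0 : 0 <= L - (c - s) * m by nra.
have : r ^+ 2 <= (L - (c - s) * m) ^+ 2 by nra.
by rewrite ler_pXn2r ?nnegrE.
Qed.

End Euclid.

Lemma cos_sin_quarter_pi {R : realType} {th : R} : 0 < th < pi / 4%:R ->
  [/\ 0 < cos th, 0 < sin th & 0 < cos th - sin th].
Proof.
move=> /andP[th0 th4]; have pi0 := pi_gt0 R.
have c0 : 0 < cos th by apply: cos_gt0_pihalf; apply/andP; split; lra.
have s0 : 0 < sin th by apply: sin_gt0_pihalf; apply/andP; split; lra.
split=> //; have : 0 < cos (th + th) by apply: cos_gt0_pihalf; apply/andP; split; lra.
rewrite cosD; nra.
Qed.

Lemma leq_uniq_count_pred {T : eqType} (a : pred T) {s1 s2 : seq T} :
  uniq s1 -> {subset s1 <= s2} -> (count a s1 <= count a s2)%N.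
Proof.
move=> s1u s12; rewrite -!size_filter; apply: uniq_leq_size; first exact: filter_uniq.
by move=> x; rewrite !mem_filter => /andP[-> /s12].
Qed.

Lemma ltn_count_subpred {T : eqType} {a b : pred T} {s : seq T} (z : T) :
  subpred a b -> z \in s -> b z -> ~~ a z -> (count a s < count b s)%N.
Proof.
move=> ab zs bz naz; rewrite -(cat_take_drop (index z s) s).
rewrite !count_cat -addnS leq_add ?sub_count //.
rewrite (drop_nth z) ?index_mem // nth_index //= bz (negbTE naz) ltnS.
exact: sub_count.
Qed.

Section Walks.
Context {R : realType} {d : nat}.
Context {S : seq 'rV[R]_d} {E : 'rV[R]_d -> 'rV[R]_d -> Prop}.

Lemma graph_dist_le_refl p : p \in S -> graph_dist_le S E p p 0.
Proof. by move=> pS; exists 0%N, (fun=> p); split=> //; rewrite big_ord0. Qed.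

Lemma graph_dist_le_cons {p r q b} : p \in S -> E p r ->
  graph_dist_le S E r q b -> graph_dist_le S E p q (eucl_dist p r + b).
Proof.
move=> pS Epr [n [x [x0 xn xS xE xb]]].
exists n.+1, (fun j => if j is j'.+1 then x j' else p); split=> //.
- by case.
- by case=> [_|j /xE]; rewrite ?x0.
- by rewrite big_ord_recl /= x0 lerD2l.
Qed.

Lemma graph_dist_le_weaken {p q b b'} : b <= b' ->
  graph_dist_le S E p q b -> graph_dist_le S E p q b'.
Proof.
move=> bb' [n [x [x0 xn xS xE xb]]].
by exists n, x; split=> //; apply: le_trans bb'.
Qed.

End Walks.

(* The number of ordered pairs of S strictly closer than p and q: a natural
   number measure for induction on the distance |pq|. *)
Definition dist_rank {R : realType} {d : nat} (S : seq 'rV[R]_d) (p q : 'rV[R]_d) : nat :=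
  count (fun z => eucl_dist z.1 z.2 < eucl_dist p q) [seq (x, y) | x <- S, y <- S].

Lemma dist_rank_lt {R : realType} {d : nat} {S : seq 'rV[R]_d} {p q r : 'rV[R]_d} :
  r \in S -> q \in S -> eucl_dist r q < eucl_dist p q ->
  (dist_rank S r q < dist_rank S p q)%N.
Proof.
move=> rS qS rq; apply: (ltn_count_subpred (r, q)) => /=.
- by move=> z /= /lt_trans; apply.
- exact: allpairs_f.
- exact: rq.
- by rewrite ltxx.
Qed.

Section FaultTolerantTheta.
Context {R : realType} {d : nat} {I : finType}.
Notation pt := 'rV[R]_d.
Variables (S : seq pt) (f : nat) (theta : R) (Cn : I -> pred pt) (u : I -> pt).
Variables (sel : pt -> I -> seq pt) (F : rel pt).
Hypotheses (theta_range : 0 < theta < pi / 4%:R)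
  (cones : cone_collection Cn u theta)
  (selP : theta_selection Cn u S (2 * f + 1) sel)
  (F_sym : forall p q, F p q = F q p)
  (F_deg : forall p, p \in S -> (count (F p) S <= f)%N).

Local Notation c := (cos theta - sin theta).

Lemma theta_detour {p q i r} : p \in S -> q \in SpC S (Cn i) p ->
  q \notin sel p i -> r \in sel p i ->
  eucl_dist p r + eucl_dist r q / c <= eucl_dist p q / c
  /\ eucl_dist r q < eucl_dist p q.
Proof.
move=> pS qC qnsel rsel; have [c0 s0 cs0] := cos_sin_quarter_pi theta_range.
have [_ _ diam u0 ray] := cones; have [_ sub _ closest] := selP p i pS.
have := sub r rsel; rewrite !mem_filter => /andP[/andP[rp rC] _].
move: (qC); rewrite mem_filter => /andP[/andP[qp qC'] _].
have x0 : r - p != 0 by rewrite subr_eq0.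
have y0 : q - p != 0 by rewrite subr_eq0.
have uC : u i \in Cn i by rewrite -[u i]scale1r ray.
have theta_pi : 0 <= theta <= pi.
  by have := pi_gt0 R; case/andP: theta_range => *; apply/andP; split; lra.
have xy := dotp_ge_cos_angle x0 y0 theta_pi (diam _ _ _ rC qC' x0 y0).
have xu := dotp_ge_cos_angle x0 (u0 i) theta_pi (diam _ _ _ rC uC x0 (u0 i)).
have xuy : dotp (r - p) (u i) <= dotp (q - p) (u i).
  apply: dotp_le_of_dist_proj_ray (u0 i) _ (closest _ _ rsel qC qnsel).
  by apply: lt_le_trans xu; rewrite !mulr_gt0 ?eucl_norm_gt0.
have rq := norm_sub_le_cos_sin (cos2Dsin2 theta) (ltW s0)
  (norm_cos_le_of_dotp (u0 i) xu xuy) xy.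
have := eucl_norm_gt0 x0; move: rq.
have -> : r - p - (q - p) = r - q by rewrite opprB addrA subrK.
rewrite [eucl_dist p r]eucl_distC [eucl_dist p q]eucl_distC /eucl_dist => rq x_gt0.
split; last by nra.
by rewrite -(ler_pM2r cs0) mulrDl !divfK ?gt_eqF //; nra.
Qed.

Lemma exists_fault_free_neighbor {p q i} : p \in S -> q \in S ->
  q \in SpC S (Cn i) p -> q \notin sel p i ->
  exists2 r, r \in sel p i & ~~ F p r && ~~ F q r.
Proof.
move=> pS qS qC qnsel; have [sel_uniq sub sel_size _] := selP p i pS.
have sel_full : size (sel p i) = (2 * f + 1)%N.
  have : (size (q :: sel p i) <= size (SpC S (Cn i) p))%N.
    apply: uniq_leq_size => [|x]; first by rewrite /= qnsel.
    by rewrite inE => /predU1P[->|/sub].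
  by rewrite /= sel_size; lia.
have selS : {subset sel p i <= S} by move=> x /sub; rewrite mem_filter => /andP[].
have Fp : (count (F p) (sel p i) <= f)%N :=
  leq_trans (leq_uniq_count_pred (F p) sel_uniq selS) (F_deg _ pS).
have Fq : (count (F q) (sel p i) <= f)%N :=
  leq_trans (leq_uniq_count_pred (F q) sel_uniq selS) (F_deg _ qS).
have : has (predC (predU (F p) (F q))) (sel p i).
  rewrite has_count; have := count_predUI (F p) (F q) (sel p i).
  have := count_predC (predU (F p) (F q)) (sel p i).
  move: Fp Fq; rewrite sel_full; lia.
by case/hasP=> r rsel; rewrite /= negb_or; exists r.
Qed.

Lemma fault_free_theta_route p q : p \in S -> q \in S -> ~~ F p q ->
  graph_dist_le S (fun x y => theta_edge S sel x y /\ ~~ F x y) p q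
    (eucl_dist p q / c).
Proof.
have [c0 s0 cs0] := cos_sin_quarter_pi theta_range.
have [n] := ubnP (dist_rank S p q); elim: n p q => // n IH p q rank_pq pS qS nFpq.
have [->|pq] := eqVneq p q.
  apply: graph_dist_le_weaken (graph_dist_le_refl _ qS).
  by rewrite divr_ge0 ?eucl_norm_ge0 ?ltW.
have [_ cover _ _ _] := cones; have [i qC] := cover (q - p).
have qSpC : q \in SpC S (Cn i) p by rewrite mem_filter eq_sym pq qC qS.
have [qsel|qnsel] := boolP (q \in sel p i).
  apply: graph_dist_le_weaken (graph_dist_le_cons pS _ (graph_dist_le_refl _ qS)).
    rewrite addr0 ler_pdivlMr //; have := eucl_norm_ge0 (p - q).
    by have := cos_le1 theta; rewrite /eucl_dist; nra.
  by split=> //; split=> //; exists i; left.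
have [r rsel /andP[nFpr nFqr]] := exists_fault_free_neighbor pS qS qSpC qnsel.
have [detour rq_lt] := theta_detour pS qSpC qnsel rsel.
have [_ sub _ _] := selP p i pS.
have rS : r \in S by move: (sub r rsel); rewrite mem_filter => /andP[].
apply: graph_dist_le_weaken detour (graph_dist_le_cons pS _ (IH r q _ rS qS _)).
- by split=> //; split=> //; exists i; left.
- by apply: leq_trans (dist_rank_lt rS qS rq_lt) _; rewrite -ltnS.
- by rewrite F_sym.
Qed.

End FaultTolerantTheta.

Theorem lemma11 (R : realType) (d : nat) (S : seq 'rV[R]_d) (f : nat)
    (theta : R) (I : finType) (Cn : I -> pred 'rV[R]_d) (u : I -> 'rV[R]_d)
    (sel : 'rV[R]_d -> I -> seq 'rV[R]_d) (F : rel 'rV[R]_d) :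
  uniq S ->
  0 < theta -> theta < pi / 4%:R ->
  cone_collection Cn u theta ->
  theta_selection Cn u S (2 * f + 1) sel ->
  (forall p q, F p q = F q p) ->
  (forall p q, F p q -> theta_edge S sel p q) ->
  (forall p, p \in S -> (count (F p) S <= f)%N) ->
  forall p q, p \in S -> q \in S -> p != q -> ~~ F p q ->
    graph_dist_le S (fun x y => theta_edge S sel x y /\ ~~ F x y) p q
      (eucl_dist p q / (cos theta - sin theta)).
Proof.
move=> _ th0 th4 cones selP F_sym _ F_deg p q pS qS _.
by apply: (@fault_free_theta_route _ _ _ S f theta Cn u); rewrite ?th0.
Qed.
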